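(* Let $I$ be a BPPS instance with $d$ scenarios in which every item has size at least $\varepsilon^2$, let $\bar I$ be its linearly grouped instance, let $\bar{\mathcal{P}}^1$ be an optimal solution for $\bar I$, and let $\mathcal{P}^1$ be obtained from $\bar{\mathcal{P}}^1$ by replacing each item of $\bar G_t^\ell$ by its corresponding item of $G_t^\ell$. Then $\mathrm{val}_{BPPS}(\mathcal{P}^1)\le\mathrm{OPT}(I)$.
   Context: A BPPS instance has $d$ scenarios, items $\mathcal{I}$, each item $i$ with size $s_i$ and type $\mathcal{K}_i\subseteq\{1,\dots,d\}$, and bins of capacity $1$; $S_k=\{i:k\in\mathcal{K}_i\}$. A packing is a partition $\mathcal{P}$ of a set of items with $\sum_{i\in B\cap S_k}s_i\le1$ for all $B\in\mathcal{P}$ and all $k$; its value is $\mathrm{val}_{BPPS}(\mathcal{P})=\max_k|\{B\in\mathcal{P}:B\cap S_k\ne\emptyset\}|$; $\mathrm{OPT}(I)$ is the minimum value of a packing of all items of $I$. $\mathcal{T}$ is the set of all types. Fix $\varepsilon\in(0,1/4]$ with $1/\varepsilon$ an integer, $m=2^d/\varepsilon^3-1$. For each type $t$, the items of type $t$ sorted in nonincreasing size are partitioned into consecutive groups $G_t^0,\dots,G_t^m$, each of the first $m$ having $\lceil|\mathcal{I}_t|/(m+1)\rceil$ items and the last at most that many. For $\ell\in\{1,\dots,m\}$, $\bar G_t^\ell$ contains, for each item of $G_t^\ell$, a corresponding new item of type $t$ with size equal to the largest size in $G_t^\ell$ (this gives a bijection between $G_t^\ell$ and $\bar G_t^\ell$).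 The linearly grouped instance $\bar I$ has item set $\bigcup_{t,\ \ell\ge1}\bar G_t^\ell$. *)

From HB Require Import structures.
From mathcomp Require Import all_boot all_order all_algebra.
Unset Printing Implicit Defensive.
Import Order.TTheory GRing.Theory Num.Theory.

(* ---------- Generic BPPS notions ----------
   A BPPS instance: d scenarios ('I_d = {0,..,d-1} stands for {1,..,d}),
   a finite type of items T, sizes s : T -> R, types K : T -> {set 'I_d}. *)
Section BPPS.
Context {R : realFieldType} {d : nat} {T : finType}.
Variables (s : T -> R) (K : T -> {set 'I_d}).

Definition Sk (k : 'I_d) : {set T} := [set i | k \in K i].

Definition is_packing (A : {set T}) (P : {set {set T}}) : bool :=
  partition P A &&
  [forall B in P, forall k : 'I_d, (\sum_(i in B :&: Sk k) s i <= 1)%R].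

Definition valBPPS (P : {set {set T}}) : nat :=
  \max_(k : 'I_d) #|[set B in P | B :&: Sk k != set0]|.

(* OPT(I) = minimum value of a packing of all items (the default #|T| of the
   fold is irrelevant as soon as some packing exists, e.g. singletons when all
   sizes are <= 1, since the value of a packing is at most #|T|). *)
Definition OPT : nat :=
  \big[minn/#|T|]_(P : {set {set T}} | is_packing [set: T] P) valBPPS P.

End BPPS.

(* ---------- Linear grouping ----------
   eps = 1/N with N an integer, m = 2^d / eps^3 - 1 = 2^d N^3 - 1. *)
Definition mgroups (d N : nat) : nat := 2 ^ d * N ^ 3 - 1.

Section Grouping.
Context {R : realFieldType} {d : nat} {T : finType}.
Variables (s : T -> R) (K : T -> {set 'I_d}) (N : nat).
(* ord t : the items of type t sorted in nonincreasing size *)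
Variable ord : {set 'I_d} -> seq T.

Definition items_of_type (t : {set 'I_d}) : {set T} := [set i | K i == t].

(* group size ceil(|I_t| / (m+1)) *)
Definition gsize (t : {set 'I_d}) : nat :=
  (#|items_of_type t| + mgroups d N) %/ (mgroups d N).+1.

(* index l of the group G_t^l containing item i (t = K i): positions
   l*q, ..., (l+1)*q - 1 in the sorted list, q = gsize t *)
Definition grp (i : T) : nat := index i (ord (K i)) %/ gsize (K i).

Definition group_of (t : {set 'I_d}) (l : nat) : {set T} :=
  [set i | (K i == t) && (grp i == l)].

Definition gmax (i : T) : R :=
  \big[Num.max/0%R]_(j in group_of (K i) (grp i)) s j.

(* The linearly grouped instance: its items correspond bijectively (via val)
   to the items of I lying in groups G_t^l with l >= 1; the item
   corresponding to i has type K i and size equal to the largest size in the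
   group of i. *)
Definition bar_item : finType := {i : T | 0 < grp i}.
Definition bar_size (x : bar_item) : R := gmax (val x).
Definition bar_type (x : bar_item) : {set 'I_d} := K (val x).

Definition unbar_packing (P : {set {set bar_item}}) : {set {set T}} :=
  [set (fun B : {set bar_item} => [set val x | x in B]) B | B in P].

End Grouping.

From mathcomp Require Import all_boot all_order all_algebra.
From mathcomp Require Import zify.
Import Order.TTheory GRing.Theory Num.Theory.

(* Let q be the group size of type t.  Sending the item at position p >= q of
   the sorted list of type t to the item at position p - q is injective and
   type preserving, and the image precedes the whole group of position p, so
   it is at least as large as the grouped size of that item.  Pulling a packing
   of I back along this shift gives a packing of bar I of no larger value,
   hence OPT(bar I) <= OPT(I).  Mapping grouped items back to their originals
   cannot increase the number of bins meeting a scenario, so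
   val(P^1) <= val(bar P^1) = OPT(bar I). *)

Lemma ler_sum_subset (R : numDomainType) (T : finType) (A B : {set T})
    (F : T -> R) :
  A \subset B -> (forall i, i \in B -> 0 <= F i)%R ->
  (\sum_(i in A) F i <= \sum_(i in B) F i)%R.
Proof.
move=> sAB F_ge0; rewrite [leRHS](big_setID A) /= (setIidPr sAB) lerDl.
by apply: sumr_ge0 => i; rewrite inE => /andP[_ /F_ge0].
Qed.

Lemma valBPPS_le_imset [d : nat] [U T : finType]
    [KU : U -> {set 'I_d}] [KT : T -> {set 'I_d}]
    [Q : {set {set U}}] [P : {set {set T}}] (g : {set T} -> {set U}) :
  (forall k, [set C in Q | C :&: Sk KU k != set0]
               \subset g @: [set B in P | B :&: Sk KT k != set0]) ->
  (valBPPS KU Q <= valBPPS KT P)%N.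
Proof.
move=> sub_img; apply/bigmax_leqP => k _; apply: leq_trans (leq_bigmax k).
exact: leq_trans (subset_leq_card (sub_img k)) (leq_imset_card _ _).
Qed.

Section PackingTransfer.
Context {R : realFieldType} {d : nat} {U T : finType}.
Variables (sU : U -> R) (KU : U -> {set 'I_d}).
Variables (sT : T -> R) (KT : T -> {set 'I_d}).

Variables (phi : U -> T) (phiK : forall x, KT (phi x) = KU x).

Lemma valBPPS_imset_le (P : {set {set U}}) :
  (valBPPS KT [set phi @: B | B : {set U} in P] <= valBPPS KU P)%N.
Proof.
apply: (valBPPS_le_imset (fun B => phi @: B)) => k; apply/subsetP => C.
rewrite !inE => /andP[/imsetP[B PB ->] /set0Pn[_ /setIP[/imsetP[x Bx ->]]]].
rewrite inE phiK => kx; apply: imset_f.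
by rewrite inE PB; apply/set0Pn; exists x; rewrite !inE Bx.
Qed.

Definition preim_packing (P : {set {set T}}) : {set {set U}} :=
  [set phi @^-1: B | B : {set T} in P] :\ set0.

Lemma valBPPS_preim_packing_le (P : {set {set T}}) :
  (valBPPS KU (preim_packing P) <= valBPPS KT P)%N.
Proof.
apply: (valBPPS_le_imset (fun B => phi @^-1: B)) => k; apply/subsetP => C.
rewrite !inE => /andP[/andP[_ /imsetP[B PB ->]] /set0Pn[x]].
rewrite !inE -phiK => /andP[Bx kx]; apply: imset_f.
by rewrite inE PB; apply/set0Pn; exists (phi x); rewrite !inE Bx.
Qed.

Lemma partition_preim_packing (P : {set {set T}}) (A : {set T}) :
  partition P A -> partition (preim_packing P) (phi @^-1: A).
Proof.
move=> partP; apply/and3P; split; last by rewrite !inE eqxx.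
- apply/eqP/setP => x; rewrite [RHS]inE -(cover_partition partP).
  apply/bigcupP/idP => [[_ /setD1P[_ /imsetP[B PB ->]]]|coverPx].
    by rewrite inE => Bx; apply/bigcupP; exists B.
  exists (phi @^-1: pblock P (phi x)); last by rewrite inE mem_pblock.
  rewrite !inE imset_f ?pblock_mem // andbT.
  by apply/set0Pn; exists x; rewrite inE mem_pblock.
- apply/trivIsetP => C1 C2 /setD1P[_ /imsetP[B1 PB1 ->]].
  move=> /setD1P[_ /imsetP[B2 PB2 ->]] neq_preim.
  have neqB : B1 != B2 by apply: contraNneq neq_preim => ->.
  have := trivIsetP (partition_trivIset partP) _ _ PB1 PB2 neqB.
  by rewrite -!setI_eq0 -preimsetI => /eqP ->; rewrite preimset0.
Qed.

Hypothesis phi_inj : injective phi.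
Hypothesis sU_le : forall x, (sU x <= sT (phi x))%R.
Hypothesis sT_ge0 : forall y, (0 <= sT y)%R.

Lemma is_packing_preim (P : {set {set T}}) (A : {set T}) :
  is_packing sT KT A P -> is_packing sU KU (phi @^-1: A) (preim_packing P).
Proof.
case/andP => partP feasP; rewrite /is_packing partition_preim_packing //=.
apply/forall_inP => _ /setD1P[_ /imsetP[B PB ->]]; apply/forallP => k.
apply: le_trans ((forallP (forall_inP feasP B PB)) k).
apply: le_trans (ler_sum _ (fun x _ => sU_le x)) _.
rewrite -big_imset /=; last by move=> x y _ _; apply: phi_inj.
apply: ler_sum_subset => [|y _]; last exact: sT_ge0.
apply/subsetP => y /imsetP[x /setIP[]].
by rewrite !inE -phiK => Bx kx ->; rewrite Bx.
Qed.

Lemma OPT_le_of_injection : (OPT sU KU <= OPT sT KT)%N.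
Proof.
have OPT_le_val Q :
    is_packing sU KU [set: U] Q -> (OPT sU KU <= valBPPS KU Q)%N.
  exact: (bigmin_le_cond (T := nat)).
apply: (big_ind (fun v => OPT sU KU <= v)%N) => [|a b le_a le_b|P packP].
- apply: leq_trans (leq_card phi phi_inj).
  exact: (bigmin_le_id (T := nat)).
- by rewrite leq_min le_a.
- apply: leq_trans (valBPPS_preim_packing_le P).
  by apply: OPT_le_val; rewrite -(preimsetT phi); apply: is_packing_preim.
Qed.

End PackingTransfer.

Section ShiftDown.
Context {R : realFieldType} {d : nat} {T : finType}.
Variables (s : T -> R) (K : T -> {set 'I_d}) (N : nat).
Variable ord : {set 'I_d} -> seq T.
Hypothesis ord_perm : forall t, perm_eq (ord t) (enum (items_of_type K t)).
Hypothesis ord_sorted : forall t, sorted (fun a b => (s b <= s a)%R) (ord t).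

Local Notation pos i := (index i (ord (K i))).
Local Notation q i := (gsize K N (K i)).

Definition shift_down (i : T) : T := nth i (ord (K i)) (pos i - q i).

Lemma mem_ord t i : (i \in ord t) = (K i == t).
Proof. by rewrite (perm_mem (ord_perm t)) mem_enum inE. Qed.

Lemma uniq_ord t : uniq (ord t).
Proof. by rewrite (perm_uniq (ord_perm t)) enum_uniq. Qed.

Lemma shift_down_pos_lt i : (pos i - q i < size (ord (K i)))%N.
Proof. by rewrite (leq_ltn_trans (leq_subr _ _)) // index_mem mem_ord. Qed.

Lemma shift_down_type i : K (shift_down i) = K i.
Proof. by apply/eqP; rewrite -mem_ord mem_nth // shift_down_pos_lt. Qed.

Lemma index_shift_down i : index (shift_down i) (ord (K i)) = pos i - q i.
Proof. by rewrite index_uniq ?uniq_ord ?shift_down_pos_lt. Qed.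

Lemma gsize_gt0 i : (0 < grp K N ord i)%N -> (0 < q i)%N.
Proof. by rewrite /grp; case: (q i) => [|//]; rewrite divn0. Qed.

Lemma gsize_le_pos i : (0 < grp K N ord i)%N -> (q i <= pos i)%N.
Proof. by move=> grp_gt0; rewrite -(divn_gt0 _ (gsize_gt0 _ grp_gt0)). Qed.

Lemma shift_down_inj :
  {in [pred i | 0 < grp K N ord i]%N &, injective shift_down}.
Proof.
move=> i j /gsize_le_pos le_qi /gsize_le_pos le_qj eq_shift.
have eqK : K i = K j by rewrite -shift_down_type eq_shift shift_down_type.
have := index_shift_down j; rewrite -eq_shift -eqK index_shift_down => eq_pos.
have {}eq_pos : pos i = index j (ord (K i)).
  by rewrite eqK in eq_pos le_qi *; lia.
have j_ord : j \in ord (K i) by rewrite mem_ord eqK.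
by rewrite -(nth_index i j_ord) -eq_pos nth_index // mem_ord.
Qed.

Hypothesis s_ge0 : forall i, (0 <= s i)%R.

Lemma gmax_le_shift_down i :
  (0 < grp K N ord i)%N -> (gmax s K N ord i <= s (shift_down i))%R.
Proof.
move=> /gsize_gt0 q_gt0; apply: bigmax_le => [|j]; first exact: s_ge0.
rewrite inE => /andP[/eqP Kj /eqP grp_j].
have j_ord : j \in ord (K i) by rewrite mem_ord Kj.
have le_pos : (pos i - q i <= index j (ord (K i)))%N.
  have := leq_divM (index j (ord (K i))) (q i).
  have := ltn_ceil (pos i) q_gt0.
  by move: grp_j; rewrite /grp Kj => ->; rewrite mulSn; lia.
rewrite -(nth_index i j_ord).
have ge_trans : transitive (fun a b => (s b <= s a)%R).
  by move=> b a c /= ba cb; apply: le_trans cb ba.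
apply: (sorted_leq_nth ge_trans (fun a => lexx (s a))) => //.
  by rewrite inE shift_down_pos_lt.
by rewrite inE index_mem.
Qed.

End ShiftDown.

Theorem lemma6 (R : realFieldType) (d : nat) (T : finType)
  (s : T -> R) (K : T -> {set 'I_d}) (N : nat)
  (* eps = 1/N in (0, 1/4] *)
  (hN : (4 <= N)%N)
  (* every item has size in [eps^2, 1] *)
  (hs_lo : forall i, ((N%:R : R)^-1 ^+ 2 <= s i)%R)
  (hs_hi : forall i, (s i <= 1)%R)
  (* ord t: items of type t sorted in nonincreasing size *)
  (ord : {set 'I_d} -> seq T)
  (hperm : forall t, perm_eq (ord t) (enum (items_of_type K t)))
  (hsort : forall t, sorted (fun a b => (s b <= s a)%R) (ord t))
  (* an optimal solution of the linearly grouped instance *)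
  (Pbar : {set {set bar_item K N ord}})
  (hPbar : is_packing (bar_size s K N ord) (bar_type K N ord) [set: bar_item K N ord] Pbar)
  (hopt : valBPPS (bar_type K N ord) Pbar
          = OPT (bar_size s K N ord) (bar_type K N ord)) :
  (valBPPS K (unbar_packing K N ord Pbar) <= OPT s K)%N.
Proof.
have s_ge0 i : (0 <= s i)%R.
  by apply: le_trans (hs_lo i); rewrite exprn_ge0 // invr_ge0 ler0n.
pose phi (x : bar_item K N ord) := shift_down K N ord (val x).
have unbar_le :=
  valBPPS_imset_le (bar_type K N ord) K val (fun _ => erefl) Pbar.
apply: leq_trans unbar_le _.
rewrite hopt; apply: (OPT_le_of_injection _ _ _ _ phi).
- by move=> x; rewrite shift_down_type.
- move=> x y /(shift_down_inj K N ord hperm _ _ (valP x) (valP y)).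
  exact: val_inj.
- by move=> x; apply: gmax_le_shift_down => //; apply: (valP x).
- exact: s_ge0.
Qed.
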